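(* Let $\mathbb{U},B\in\mathbb{R}^{n\times n}$, consider the bilinear system $z_{t+1}=\mathbb{U}z_t+u_tBz_t$, $z_t\in\mathbb{R}^n$, $u_t\in\mathbb{R}$, and fix a real number $\varepsilon\neq0$. Consider the optimization problem \[ \max\ \log\det Q\quad\text{subject to}\quad \begin{pmatrix} -Q & 0 & y & Q\mathbb{U}^\top\\ 0 & -\varepsilon Q & 0 & QB^\top\\ y^\top & 0 & -\frac{1}{\varepsilon} & 0\\ \mathbb{U}Q & BQ & 0 & -Q \end{pmatrix}\prec 0 \] in the variables $Q=Q^\top\in\mathbb{R}^{n\times n}$ and $y\in\mathbb{R}^n$, and let $(\hat Q,\hat y)$ be a solution. Then the ellipsoid $\hat{\mathscr{E}}=\{z\in\mathbb{R}^n: z^\top\hat Q^{-1}z\le1\}$ is a stabilizability ellipsoid of the bilinear system, with feedback control law $u=\hat k^\top z$, where $\hat k=\hat Q^{-1}\hat y$.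
   Context: $\prec0$ denotes negative definiteness. A stabilizability ellipsoid for the feedback $u=\hat k^\top z$ is an ellipsoid $\{z: z^\top \hat Q^{-1}z\le1\}$ inside which the closed-loop system $z_{t+1}=\mathbb{U}z_t+(\hat k^\top z_t)Bz_t$ is stabilized, with $V(z)=z^\top\hat Q^{-1}z$ a (control) Lyapunov function strictly decreasing along nonzero closed-loop states in the ellipsoid. *)

From HB Require Import structures.
From mathcomp Require Import all_boot all_order all_algebra.
From mathcomp Require Import all_classical all_reals all_analysis.
Set Implicit Arguments. Unset Strict Implicit. Unset Printing Implicit Defensive.
Import Order.TTheory GRing.Theory Num.Theory.
Local Open Scope ring_scope.

Definition negdef (R : realType) (m : nat) (A : 'M[R]_m) : Prop :=
  forall x : 'cV[R]_m, x != 0 -> (x^T *m A *m x) 0 0 < 0.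

Definition posdef (R : realType) (m : nat) (A : 'M[R]_m) : Prop :=
  forall x : 'cV[R]_m, x != 0 -> 0 < (x^T *m A *m x) 0 0.

(* The LMI matrix, with block sizes n, n, 1, n:
   [ -Q      0     y      Q U^T ]
   [  0   -eps Q   0      Q B^T ]
   [ y^T     0   -1/eps   0     ]
   [ U Q    B Q    0     -Q     ] *)
Definition lmi_matrix (R : realType) (n : nat) (U B : 'M[R]_n) (eps : R)
    (Q : 'M[R]_n) (y : 'cV[R]_n) : 'M[R]_((n + n) + (1 + n)) :=
  block_mx
    (block_mx (- Q) 0 0 (- (eps *: Q)))
    (block_mx y (Q *m U^T) 0 (Q *m B^T))
    (block_mx y^T 0 (U *m Q) (B *m Q))
    (block_mx (- (eps^-1)%:M) 0 0 (- Q)).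

Definition lmi_feasible (R : realType) (n : nat) (U B : 'M[R]_n) (eps : R)
    (Q : 'M[R]_n) (y : 'cV[R]_n) : Prop :=
  Q^T = Q /\ negdef (lmi_matrix U B eps Q y).

Definition closed_loop (R : realType) (n : nat) (U B : 'M[R]_n) (k z : 'cV[R]_n)
    : 'cV[R]_n :=
  U *m z + ((k^T *m z) 0 0) *: (B *m z).

Definition lyapV (R : realType) (n : nat) (Q : 'M[R]_n) (z : 'cV[R]_n) : R :=
  (z^T *m invmx Q *m z) 0 0.

Definition stabilizability_ellipsoid (R : realType) (n : nat) (U B Q : 'M[R]_n)
    (k : 'cV[R]_n) : Prop :=
  Q^T = Q /\ posdef Q /\
  forall z : 'cV[R]_n, z != 0 -> lyapV Q z <= 1 ->
    lyapV Q (closed_loop U B k z) < lyapV Q z.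

From HB Require Import structures.
From mathcomp Require Import all_boot all_order all_algebra.
From mathcomp Require Import all_classical all_reals all_analysis.
From mathcomp Require Import ring lra.
Set Implicit Arguments. Unset Strict Implicit. Unset Printing Implicit Defensive.
Import Order.TTheory GRing.Theory Num.Theory.
Local Open Scope ring_scope.

(* Evaluate the quadratic form of the LMI matrix at the test vector
   (Q^-1 z, u Q^-1 z, eps u, Q^-1 z+), where u = k^T z and z+ is the closed-loop
   successor of z.  The off-diagonal terms recombine into 2 V(z+), and
   negativity of the form yields V(z+) < V(z) - eps u^2 (1 - V(z)); inside the
   ellipsoid the last term is nonnegative.  Simpler test vectors show that
   eps > 0 and that Q is positive definite. *)

Section QuadraticForms.
Variables (R : realType) (m : nat).

Lemma trmx11 (A : 'M[R]_1) : A^T = A.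
Proof. by apply/matrixP=> i j; rewrite !ord1 mxE. Qed.

Lemma form_trmx (v w : 'cV[R]_m) (M : 'M[R]_m) :
  v^T *m M *m w = w^T *m M^T *m v.
Proof. by rewrite -[LHS]trmx11 !trmx_mul trmxK mulmxA. Qed.

Lemma posdef_unitmx (Q : 'M[R]_m) : posdef Q -> Q \in unitmx.
Proof.
move=> pdQ; rewrite unitmxE unitfE; apply/det0P => -[v v0 vQ].
have vT0 : v^T != 0 by rewrite -trmx0 (inj_eq trmx_inj).
by have := pdQ _ vT0; rewrite trmxK vQ mul0mx mxE ltxx.
Qed.

Lemma form_invmx (Q : 'M[R]_m) (v w : 'cV[R]_m) : Q^T = Q -> Q \in unitmx ->
  (invmx Q *m v)^T *m Q *m (invmx Q *m w) = v^T *m invmx Q *m w.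
Proof.
by move=> sQ uQ; rewrite -mulmxA mulKVmx // trmx_mul trmx_inv sQ.
Qed.

Lemma form_scale (k : R) (M : 'M[R]_m) (v : 'cV[R]_m) :
  ((k *: v)^T *m M *m (k *: v)) 0 0 = k ^+ 2 * (v^T *m M *m v) 0 0.
Proof.
by rewrite linearZ /= [(k *: v)^T]linearZ -!scalemxAl scalerA [LHS]mxE expr2.
Qed.

End QuadraticForms.

Section LMI.
Variables (R : realType) (n : nat) (U B : 'M[R]_n) (eps : R).
Variables (Q : 'M[R]_n) (y : 'cV[R]_n).
Hypothesis sQ : Q^T = Q.

Definition lmi_vector (a b : 'cV[R]_n) (c : R) (d : 'cV[R]_n)
    : 'cV[R]_((n + n) + (1 + n)) :=
  col_mx (col_mx a b) (col_mx c%:M d).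

Lemma lmi_vector_neq0 a b c d :
  (a != 0) || (c != 0) -> lmi_vector a b c d != 0.
Proof.
rewrite !col_mx_eq0 !negb_and => /orP[a0 | c0]; first by rewrite a0.
by rewrite orbC -scalemx1 scalemx_eq0 (negPf c0) oner_eq0.
Qed.

Lemma lmi_formE a b c d :
  ((lmi_vector a b c d)^T *m lmi_matrix U B eps Q y *m lmi_vector a b c d) 0 0 =
  - (a^T *m Q *m a) 0 0 - eps * (b^T *m Q *m b) 0 0 - eps^-1 * c ^+ 2
  - (d^T *m Q *m d) 0 0 + 2 * c * (y^T *m a) 0 0
  + 2 * (d^T *m U *m Q *m a) 0 0 + 2 * (d^T *m B *m Q *m b) 0 0.
Proof.
rewrite /lmi_vector /lmi_matrix !tr_col_mx !mul_row_block !mul_row_col.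
rewrite ?mulmx0 ?mul0mx ?addr0 ?add0r !add_row_mx !mul_row_col !mulmxDl.
rewrite tr_scalar_mx !mulmxN !mulNmx !mul_scalar_mx -!scalemxAl !mulmxA.
rewrite -!scalemxAr mul_mx_scalar -scalar_mxM -scalemxAl.
have symE (M : 'M[R]_n) (v w : 'cV[R]_n) : v^T *m Q *m M^T *m w = w^T *m M *m Q *m v.
  by rewrite -[v^T *m Q *m M^T]mulmxA form_trmx trmx_mul trmxK sQ mulmxA.
rewrite !symE -[a^T *m y]trmx11 trmx_mul trmxK !mxE eqxx mulr1n expr2; lra.
Qed.

Hypothesis negQ : negdef (lmi_matrix U B eps Q y).

Lemma lmi_eps_gt0 : 0 < eps.
Proof.
have /negQ : lmi_vector 0 0 1 0 != 0.
  by apply: lmi_vector_neq0; rewrite oner_neq0 orbT.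
rewrite lmi_formE !trmx0 ?mul0mx ?mulmx0 !mxE => lt0.
by rewrite -invr_gt0; lra.
Qed.

Lemma lmi_posdef : posdef Q.
Proof.
move=> a a0; have /negQ : lmi_vector a 0 0 0 != 0 by rewrite lmi_vector_neq0 ?a0.
by rewrite lmi_formE !trmx0 ?mul0mx ?mulmx0 !mxE; lra.
Qed.

Lemma lyapV_closed_loop_lt (z : 'cV[R]_n) : z != 0 ->
  lyapV Q (closed_loop U B (invmx Q *m y) z)
    + eps * ((invmx Q *m y)^T *m z) 0 0 ^+ 2 * (1 - lyapV Q z) < lyapV Q z.
Proof.
move=> z0; set u := (_ *m z) 0 0; set zp := closed_loop _ _ _ z.
have uQ : Q \in unitmx := posdef_unitmx lmi_posdef.
set a := invmx Q *m z; set d := invmx Q *m zp.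
have a0 : a != 0 by apply: contra z0 => /eqP a0; rewrite -(mulKVmx uQ z) -/a a0 mulmx0.
have /negQ : lmi_vector a (u *: a) (eps * u) d != 0 by rewrite lmi_vector_neq0 ?a0.
have yaE : (y^T *m a) 0 0 = u by rewrite /u /a trmx_mul trmx_inv sQ mulmxA.
have VE : (a^T *m Q *m a) 0 0 = lyapV Q z by rewrite form_invmx.
have VpE : (d^T *m Q *m d) 0 0 = lyapV Q zp by rewrite form_invmx.
have crossE :
    (d^T *m U *m Q *m a) 0 0 + (d^T *m B *m Q *m (u *: a)) 0 0 = lyapV Q zp.
  transitivity ((d^T *m U *m Q *m a + d^T *m B *m Q *m (u *: a)) 0 0).
    by rewrite [RHS]mxE.
  rewrite /lyapV; congr (_ 0 0).
  rewrite -(scalemxAr u (d^T *m B *m Q)) -!mulmxA !mulKVmx // scalemxAr -mulmxDr.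
  by rewrite /d trmx_mul trmx_inv sQ -mulmxA.
have epsuE : eps^-1 * (eps * u) ^+ 2 = eps * u ^+ 2.
  by field; rewrite gt_eqF // lmi_eps_gt0.
rewrite lmi_formE yaE form_scale VE VpE epsuE; lra.
Qed.

End LMI.

Theorem corollary1 (R : realType) (n : nat) (U B : 'M[R]_n) (eps : R)
    (Qh : 'M[R]_n) (yh : 'cV[R]_n) :
  eps != 0 ->
  lmi_feasible U B eps Qh yh ->
  (forall (Q : 'M[R]_n) (y : 'cV[R]_n),
      lmi_feasible U B eps Q y -> ln (\det Q) <= ln (\det Qh)) ->
  stabilizability_ellipsoid U B Qh (invmx Qh *m yh).
Proof.
move=> _ [sQ negQ] _; split=> //; split; first exact: lmi_posdef sQ negQ.
move=> z z0 Vz_le1; have := lyapV_closed_loop_lt sQ negQ z0.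
set u := (_ *m z) 0 0; have eps_gt0 := lmi_eps_gt0 sQ negQ.
have : 0 <= eps * u ^+ 2 * (1 - lyapV Qh z).
  by rewrite mulr_ge0 ?subr_ge0 // mulr_ge0 ?sqr_ge0 // ltW.
lra.
Qed.
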